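(* For every $n\ge1$, the matrix $\left(h_{1-i-j}(X_1,\dots,X_n)\right)_{1\le i,j\le n}$ is invertible and $$\left[\left(h_{1-i-j}(X_1,\dots,X_n)\right)_{1\le i,j\le n}\right]^{-1}=\left((-1)^{i+j}e_{i+j-1}(X_1,\dots,X_n)\right)_{1\le i,j\le n},$$ where $e_m$ is the $m$-th elementary symmetric polynomial ($e_m=0$ for $m>n$).
   Context: Extended complete homogeneous symmetric functions: for $k\ge0$, $h_k(X_1,\dots,X_n)=\sum_{l_1+\dots+l_n=k,\ l_i\ge0}X_1^{l_1}\cdots X_n^{l_n}$; for $k<0$, $h_k(X_1,\dots,X_n)=(-1)^{n+1}\sum_{l_1+\dots+l_n=k,\ l_i<0}X_1^{l_1}\cdots X_n^{l_n}$. *)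

From HB Require Import structures.
From mathcomp Require Import all_boot all_order all_algebra fraction.
From mathcomp Require Import mpoly.
Set Implicit Arguments. Unset Strict Implicit. Unset Printing Implicit Defensive.
Import GRing.Theory.
Local Open Scope ring_scope.

(* Extended complete homogeneous symmetric function h_k(x_1,...,x_n), k : int,
   evaluated at x : 'I_n -> F in a field F (x_i are meant to be invertible).
   - k = m >= 0 : sum over l : 'I_n -> nat with sum l = m of prod x_i^(l_i)
     (exponents are bounded by m, hence l ranges over {ffun 'I_n -> 'I_m.+1}).
   - k = -(m+1) < 0 : (-1)^(n+1) * sum over exponent vectors (l_1..l_n) with
     all l_i < 0 and sum l_i = k of prod x_i^(l_i).  We write l_i = - a_i with
     1 <= a_i <= m+1, i.e. a ranges over {ffun 'I_n -> 'I_m.+2}. *)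
Definition hext (F : fieldType) (n : nat) (x : 'I_n -> F) (k : int) : F :=
  match k with
  | Posz m =>
      \sum_(a : {ffun 'I_n -> 'I_m.+1} | (\sum_i (a i : nat) == m)%N)
         \prod_i x i ^+ a i
  | Negz m =>
      (-1) ^+ n.+1 *
      \sum_(a : {ffun 'I_n -> 'I_m.+2} |
              (\sum_i (a i : nat) == m.+1)%N && [forall i, (0 < a i)%N])
         \prod_i (x i) ^- (a i)
  end.

(* The field of rational functions Q(X_1,...,X_n) realised as the fraction
   field of Z[X_1,...,X_n]; it contains the Laurent polynomial ring. *)
Definition ratfun (n : nat) := {fraction {mpoly int[n]}}.

Definition Xv (n : nat) (i : 'I_n) : ratfun n := @FracField.tofrac {mpoly int[n]} 'X_i.

(* e_m(X_1,...,X_n) in ratfun n (the library's mesym; it is 0 for m > n). *)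
Definition esym (n m : nat) : ratfun n := @FracField.tofrac {mpoly int[n]} (mesym n int m).

Definition Hmat (n : nat) : 'M[ratfun n]_n :=
  \matrix_(i < n, j < n) hext (@Xv n) (1 - (i.+1)%:Z - (j.+1)%:Z).

Definition Emat (n : nat) : 'M[ratfun n]_n :=
  \matrix_(i < n, j < n) ((-1) ^+ (i.+1 + j.+1) * esym n (i.+1 + j.+1 - 1)).

From Pilot Require Import Defs.
From HB Require Import structures.
From mathcomp Require Import all_boot all_order all_algebra fraction.
From mathcomp Require Import mpoly.
From mathcomp Require Import ring zify.
Set Implicit Arguments. Unset Strict Implicit. Unset Printing Implicit Defensive.
Import GRing.Theory.
Local Open Scope ring_scope.

(* We work over an arbitrary field F with nonzero points
   x_1, ..., x_n and use two polynomials in an auxiliary variable t: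
     Hgen M = prod_i (x_i^-1 t + x_i^-2 t^2 + ... + x_i^-M t^M),
     Epoly  = prod_i (t - x_i).
   For m < M the coefficient of t^(m+1) in Hgen M is (-1)^(n+1) h_{-m-1}(x),
   and by Vieta the coefficient of t^(n-k) in Epoly is (-1)^k e_k(x).
   Each factor telescopes: (sum_{a=1}^M x^-a t^a)(t - x) = x^-M t^(M+1) - t,
   so Hgen M * Epoly = t^n * prod_i (-1 + x_i^-M t^M), whose coefficients
   below degree n + M are those of (-1)^n t^n.  Reading off the coefficient
   of t^(n+i-k) in this product as a convolution gives
     sum_j h_{-i-j-1}(x) (-1)^(j+k) e_{j+k+1}(x) = [i = k],
   i.e. Hmat * Emat = 1 at the point x.  Specialising x to the generators
   X_i of the rational function field yields the theorem. *)

Lemma prod_modXn (R : comNzRingType) (I : finType) K (a b : I -> {poly R}) :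
  exists Q, \prod_i (a i + b i * 'X^K) = \prod_i a i + Q * 'X^K.
Proof.
apply: (big_rec2 (fun u v => exists Q, u = v + Q * 'X^K)).
  by exists 0; rewrite mul0r addr0.
move=> i u v _ [Q ->]; exists (b i * v + a i * Q + b i * Q * 'X^K); ring.
Qed.

Lemma coef_prod_ffun (R : comNzRingType) n (p : 'I_n -> {poly R}) m :
  (\prod_(i < n) p i)`_m =
  \sum_(f : {ffun 'I_n -> 'I_m.+1} | (\sum_i (f i : nat) == m)%N)
     \prod_i (p i)`_(f i).
Proof.
have [Q HQ] := prod_modXn m.+1 (take_poly m.+1 \o p) (drop_poly m.+1 \o p).
have -> : \prod_i p i =
    \prod_i (take_poly m.+1 (p i) + drop_poly m.+1 (p i) * 'X^(m.+1)).
  by apply: eq_bigr => i _; rewrite poly_take_drop.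
rewrite HQ coefD coefMXn ltnSn addr0 /take_poly /=.
under eq_bigr => i _ do rewrite poly_def.
rewrite bigA_distr_bigA coef_sum [RHS]big_mkcond /=.
apply: eq_bigr => f _.
have -> : \prod_i ((p i)`_(f i) *: 'X^(f i)) =
    (\prod_i (p i)`_(f i)) *: 'X^(\sum_i (f i : nat)).
  rewrite -prodrXr -mul_polyC rmorph_prod -big_split /=.
  by apply: eq_bigr => i _; rewrite mul_polyC.
by rewrite coefZ coefXn eq_sym; case: eqP; rewrite ?mulr1 ?mulr0.
Qed.

Section Evaluation.
Variables (F : fieldType) (n : nat) (x : 'I_n -> F).
Hypothesis x_neq0 : forall i, x i != 0.

Definition inv_coef i (a : nat) : F := if a == 0%N then 0 else (x i)^-1 ^+ a.
Definition inv_geom i M : {poly F} := \poly_(a < M) inv_coef i a.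

Lemma inv_geom_mul_root i M :
  inv_geom i M.+1 * ('X - (x i)%:P) = ((x i)^-1 ^+ M) *: 'X^(M.+1) - 'X.
Proof.
rewrite /inv_geom poly_def; elim: M => [|M IH].
  by rewrite big_ord1 /inv_coef eqxx scale0r mul0r expr0 scale1r expr1 subrr.
rewrite big_ord_recr /= mulrDl IH /inv_coef /=.
have hx : (x i)^-1 ^+ M.+1 * x i = (x i)^-1 ^+ M.
  by rewrite exprSr -mulrA mulVf ?mulr1.
rewrite -!mul_polyC -hx rmorphM /= !exprS; ring.
Qed.

Definition Hgen M := \prod_(i < n) inv_geom i M.+1.
Definition Epoly := \prod_(i < n) ('X - (x i)%:P).

Lemma coef_Hgen_Epoly M c :
  (c < n + M)%N -> (Hgen M * Epoly)`_c = (-1) ^+ n * (c == n)%:R.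
Proof.
move=> hc; rewrite /Hgen /Epoly -big_split /=.
under eq_bigr => i _ do rewrite inv_geom_mul_root.
have -> : \prod_(i < n) ((x i)^-1 ^+ M *: 'X^(M.+1) - 'X : {poly F}) =
    'X^n * \prod_(i < n) ((-1)%:P + ((x i)^-1 ^+ M)%:P * 'X^M).
  have -> : ('X^n : {poly F}) = \prod_(i < n) 'X by rewrite prodr_const card_ord.
  rewrite -big_split /=; apply: eq_bigr => i _.
  by rewrite -mul_polyC exprS polyCN polyC1 mulrDr mulrN1 mulrCA addrC.
have [Q ->] := prod_modXn M (fun _ : 'I_n => (-1)%:P)
                              (fun i => ((x i)^-1 ^+ M)%:P).
rewrite prodr_const card_ord -rmorphXn coefXnM.
case: ltnP => hcn.
  rewrite [(c == n)]negbTE ?mulr0 //; lia.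
rewrite coefD coefMXn coefC.
have -> : (c - n < M)%N by lia.
rewrite addr0; have -> : (c - n == 0)%N = (c == n) by lia.
by case: (c == n); rewrite ?mulr1 ?mulr0.
Qed.

Lemma coef_Hgen M m : (m <= M)%N -> (Hgen M)`_m =
  \sum_(f : {ffun 'I_n -> 'I_m.+1} | (\sum_i (f i : nat) == m)%N)
     \prod_i inv_coef i (f i).
Proof.
move=> hm; rewrite coef_prod_ffun; apply: eq_bigr => f _; apply: eq_bigr => i _.
by rewrite coef_poly; have -> // : (f i < M.+1)%N by have := ltn_ord (f i); lia.
Qed.

(* Each factor of Hgen M is divisible by t, so its low coefficients vanish. *)
Lemma coef_Hgen_small M m : (m < n)%N -> (m <= M)%N -> (Hgen M)`_m = 0.
Proof.
move=> hmn hm; rewrite coef_Hgen // big1 // => f /eqP hf.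
have : [exists i, (f i : nat) == 0%N].
  apply: contraLR hmn; rewrite negb_exists => /forallP H.
  rewrite -leqNgt -hf -[X in (X <= _)%N]card_ord -sum1_card.
  by apply: leq_sum => i _; have := H i; rewrite lt0n.
by case/existsP => i /eqP hi; rewrite (bigD1 i) //= /inv_coef hi eqxx mul0r.
Qed.

Lemma hext_Negz M m :
  (m.+1 <= M)%N -> hext x (Negz m) = (-1) ^+ n.+1 * (Hgen M)`_(m.+1).
Proof.
move=> hm; rewrite coef_Hgen //= big_mkcondr /=; congr (_ * _).
apply: eq_bigr => f _; case: ifP => [/forallP H | /negbT].
  apply: eq_bigr => i _; rewrite /inv_coef exprVn.
  by have := H i; rewrite lt0n => /negbTE ->.
rewrite negb_forall => /existsP [i]; rewrite lt0n negbK => /eqP hi.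
by rewrite (bigD1 i) //= /inv_coef hi eqxx mul0r.
Qed.

Definition esym_at k := \sum_(h : {set 'I_n} | #|h| == k) \prod_(j in h) x j.

Lemma esym_at_gt k : (n < k)%N -> esym_at k = 0.
Proof.
move=> hk; rewrite /esym_at big_pred0 // => h; apply/negbTE/eqP => hh.
by have := max_card h; rewrite card_ord hh; lia.
Qed.

Lemma coef_Epoly k : (k <= n)%N -> Epoly`_(n - k) = (-1) ^+ k * esym_at k.
Proof.
move=> hk; pose cs := [tuple x i | i < n].
have := mroots_coeff cs (Ordinal (hk : (k < n.+1)%N)); rewrite big_tuple /= => H.
have -> : Epoly = \prod_(i < n) ('X - (tnth cs i)%:P).
  by apply: eq_bigr => i _; rewrite tnth_mktuple.
rewrite H /mesym /esym_at rmorph_sum /=; congr (_ * _); apply: eq_bigr => h _.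
by rewrite rmorph_prod /=; apply: eq_bigr => j _; rewrite mevalXU tnth_mktuple.
Qed.

Section Entry.
Variables i k : 'I_n.

(* The j-th term of the (i,k) entry of Hmat * Emat at the point x, and a
   truncation order M large enough for all the h_{-i-j-1} involved. *)
Let term (j : nat) : F :=
  hext x (Negz (i + j)) *
  ((-1) ^+ (j.+1 + k.+1) * esym_at (j.+1 + k.+1 - 1)%N).
Let M := (n + n)%N.

Lemma term_conv j : (j + k < n)%N ->
  term j = (-1) ^+ n * ((Hgen M)`_(i.+1 + j) * Epoly`_(n - k - 1 - j)).
Proof.
move=> hjk; have hi := ltn_ord i.
rewrite /term (@hext_Negz M); last by rewrite /M; lia.
have -> : (j.+1 + k.+1 - 1 = (j + k).+1)%N by lia.
have -> : esym_at (j + k).+1 = (-1) ^+ (j + k).+1 * Epoly`_(n - k - 1 - j).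
  have -> : (n - k - 1 - j = n - (j + k).+1)%N by lia.
  by rewrite coef_Epoly 1?mulrA -1?expr2 ?sqrr_sign ?mul1r //; lia.
have -> : ((i + j).+1 = i.+1 + j)%N by lia.
rewrite addSn addnS !exprS; set s := (-1) ^+ (j + k); set t := (-1) ^+ n.
have hs : s * s = 1 by rewrite -expr2 sqrr_sign.
set G := (Hgen M)`_ _; set Q := Epoly`_ _.
by transitivity (t * (G * Q) * (s * s)); [ring | rewrite hs mulr1].
Qed.

(* The surviving terms form the full convolution for the coefficient of
   t^(n+i-k) in Hgen M * Epoly; the missing ones vanish as Hgen M = O(t^n). *)
Lemma conv_coef :
  \sum_(j < n - k) (Hgen M)`_(i.+1 + j) * Epoly`_(n - k - 1 - j) =
  (Hgen M * Epoly)`_(n + i - k).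
Proof.
have hi := ltn_ord i; have hk := ltn_ord k.
rewrite coefM -(big_mkord xpredT (fun j => (Hgen M)`_j * Epoly`_(n + i - k - j))).
rewrite (big_cat_nat (n := i.+1)) /=; [|lia|lia].
rewrite [in RHS]big1_seq ?add0r; last first.
  move=> j /andP [_]; rewrite mem_index_iota => hj.
  by rewrite coef_Hgen_small ?mul0r //; rewrite /M; lia.
rewrite [in RHS](_ : i.+1 = 0 + i.+1)%N // big_addn.
have -> : ((n + i - k).+1 - i.+1 = n - k)%N by lia.
rewrite big_mkord; apply: eq_bigr => j _.
by rewrite addnC; congr (_ * Epoly`_ _); lia.
Qed.

Lemma entry_delta : \sum_(j < n) term j = (i == k)%:R.
Proof.
have hi := ltn_ord i; have hk := ltn_ord k.
rewrite -(big_mkord xpredT term) (big_cat_nat (n := n - k)) /=; [|lia|lia].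
rewrite [X in _ + X]big1_seq ?addr0; last first.
  move=> j /andP [_]; rewrite mem_index_iota => hj.
  by rewrite /term esym_at_gt ?mulr0 //; lia.
rewrite big_mkord (eq_bigr (fun j : 'I_(n - k) =>
   (-1) ^+ n * ((Hgen M)`_(i.+1 + j) * Epoly`_(n - k - 1 - j)))); last first.
  by move=> j _; apply: term_conv; have := ltn_ord j; lia.
rewrite -mulr_sumr conv_coef coef_Hgen_Epoly; last by rewrite /M; lia.
rewrite mulrA -expr2 sqrr_sign mul1r; congr (_%:R).
by rewrite -val_eqE /=; lia.
Qed.

End Entry.
End Evaluation.

Lemma Xv_neq0 n (i : 'I_n) : Xv i != 0.
Proof.
rewrite /Xv tofrac_eq0; apply/eqP => /(congr1 (mcoeff U_(i))).
by rewrite mcoeff0 mcoeffX eqxx => /eqP; rewrite oner_eq0.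
Qed.

Lemma esymE n m : Defs.esym n m = esym_at (@Xv n) m.
Proof.
rewrite /Defs.esym /mesym rmorph_sum /=; apply: eq_bigr => h _.
by rewrite rmorph_prod.
Qed.

Lemma Hmat_index (i j : nat) : (1 - (i.+1)%:Z - (j.+1)%:Z)%R = Negz (i + j).
Proof. rewrite NegzE; lia. Qed.

(* Hmat * Emat = 1 entrywise; a one-sided inverse of a square matrix is its
   inverse. *)
Theorem mainTheorem14 (n : nat) (hn : (1 <= n)%N) :
  Hmat n \in unitmx /\ invmx (Hmat n) = Emat n.
Proof.
have HE : Hmat n *m Emat n = 1%:M.
  apply/matrixP => i k; rewrite !mxE.
  under eq_bigr => j _ do rewrite !mxE Hmat_index esymE.
  exact: entry_delta (@Xv_neq0 n) i k.
have [hu _] := mulmx1_unit HE.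
split => //.
by rewrite -[Emat n]mul1mx -(mulVmx hu) -mulmxA HE mulmx1.
Qed.
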